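(* Let $v\geq 7$ and let $C_v$ be the configuration on $\mathbb{Z}_v$ with blocks $\{m,m+1,m+3\}$, $m\in\mathbb{Z}_v$. Then its strong chromatic number is \[\chi_s(C_v)=\begin{cases}7&\text{if } v=7,\\ 6&\text{if } v=11,\\ 5&\text{if } v\equiv 1,2,3\pmod 4,\ v\notin\{7,11\},\\ 4&\text{if } v\equiv 0\pmod 4.\end{cases}\]
   Context: A strong colouring of a configuration is an assignment of colours to points such that the three points of every block receive three distinct colours; the strong chromatic number $\chi_s$ is the minimum number of colours in a strong colouring. *)

From mathcomp Require Import all_boot.
Set Implicit Arguments. Unset Strict Implicit. Unset Printing Implicit Defensive.

Definition zv_add (v : nat) (m : 'I_v) (a : nat) : 'I_v :=
  match v as n return 'I_n -> 'I_n with
  | 0 => fun m => m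
  | n.+1 => fun m => inord ((m + a) %% n.+1)
  end m.

Definition block (v : nat) (m : 'I_v) : seq 'I_v :=
  [:: m; zv_add m 1; zv_add m 3].

Definition strong_colouring (v k : nat) (c : 'I_v -> 'I_k) : Prop :=
  forall m : 'I_v, uniq (map c (block m)).

Definition strong_colourable (v k : nat) : Prop :=
  exists c : 'I_v -> 'I_k, strong_colouring c.

Definition strong_chromatic_number (v k : nat) : Prop :=
  strong_colourable v k /\ forall j, strong_colourable v j -> k <= j.

From mathcomp Require Import all_boot.
From mathcomp Require Import zify.

Set Implicit Arguments. Unset Strict Implicit. Unset Printing Implicit Defensive.

(* The blocks of C_v contain every pair of points at cyclic distance 1, 2
   or 3 (the pair {m+1, m+3} realises distance 2), and nothing else.  Hence
   a colouring c is strong exactly when two points of the same colour are at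
   cyclic distance at least 4 ([strong_colouring_spread] and
   [spread_strong_colouring], for v >= 4).  Everything then reduces to
   counting on the cycle:
   - lower bounds: points pairwise within distance 3 get distinct colours
     ([clique_bound]; gives 4 in general and 7 for v = 7); when v <= 11 a
     colour class has at most two points, so v <= 2k ([pairs_bound]); with
     four colours the colouring is 4-periodic along the cycle, which forces
     4 | v ([five_colours_needed]);
   - upper bounds: explicit patterns, each checked through the distance
     criterion ([pattern_colourable]): x mod 4 when 4 | v, x mod 6 for
     v = 11, the identity for v = 7, and blocks 0123 / 01234 for v = 4a + 5b. *)

Lemma val_zv_add n (m : 'I_n.+1) a : nat_of_ord (zv_add m a) = (m + a) %% n.+1.
Proof. by rewrite /zv_add /= inordK // ltn_pmod. Qed.

Lemma mod_add_small n p d : p < n.+1 -> d < n.+1 ->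
  ((p + d) %% n.+1 = p + d /\ p + d < n.+1) \/
  ((p + d) %% n.+1 = p + d - n.+1 /\ n.+1 <= p + d).
Proof.
move=> hp hd; case: (ltnP (p + d) n.+1) => h; first by left; rewrite modn_small.
right; split=> //; rewrite -{1}(subnK h) modnDr modn_small //; lia.
Qed.

Section CyclicDistance.
Variables (n k : nat).
Local Notation v := n.+1.

Definition spread (c : 'I_v -> 'I_k) : Prop :=
  forall x y : 'I_v, x < y -> c x = c y -> 4 <= y - x /\ 4 <= x + v - y.

Variable c : 'I_v -> 'I_k.

Lemma spread_near : 2 < n -> spread c ->
  forall (p q : 'I_v) d, 0 < d < 4 -> nat_of_ord q = (p + d) %% v -> c p != c q.
Proof.
move=> hn far p q d /andP[d0 d4] hq; apply/eqP=> E.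
have hp := ltn_ord p; have hq' := ltn_ord q.
have [[h1 h2]|[h1 h2]] := @mod_add_small n p d hp ltac:(lia); rewrite h1 in hq.
all: case: (ltngtP p q) => h.
all: try (have := far _ _ h E; lia).
all: try (have := far _ _ h (esym E); lia).
all: lia.
Qed.

Lemma spread_strong_colouring : 2 < n -> spread c -> strong_colouring c.
Proof.
move=> hn far m; have near := spread_near hn far.
have h1 : c m != c (zv_add m 1) by apply: (near _ _ 1); rewrite ?val_zv_add.
have h3 : c m != c (zv_add m 3) by apply: (near _ _ 3); rewrite ?val_zv_add.
have h13 : c (zv_add m 1) != c (zv_add m 3).
  by apply: (near _ _ 2); rewrite // !val_zv_add modnDml -addnA.
by rewrite /block /= !inE !negb_or h1 h3 h13.
Qed.

Hypothesis strong : strong_colouring c.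

Lemma block_colours (m : 'I_v) :
  [/\ c m != c (zv_add m 1), c m != c (zv_add m 3)
    & c (zv_add m 1) != c (zv_add m 3)].
Proof.
have := strong m; rewrite /block /= !inE !negb_or andbT.
by case/andP=> /andP[-> ->] ->.
Qed.

(* A strong colouring separates points at forward distance 1, 2 and 3:
   {p, p+1} and {p, p+3} lie in the block of p, {p, p+2} in that of p-1. *)
Lemma strong_near (p q : 'I_v) d :
  0 < d < 4 -> nat_of_ord q = (p + d) %% v -> c p != c q.
Proof.
have hp := ltn_ord p.
case: d => [|[|[|[|d]]]] //= _ hq.
- have -> : q = zv_add p 1 by apply: val_inj; rewrite /= val_zv_add.
  by case: (block_colours p).
- pose m : 'I_v := inord ((p + n) %% v).
  have vm : nat_of_ord m = (p + n) %% v by rewrite inordK // ltn_pmod.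
  have e1 : zv_add m 1 = p.
    apply: val_inj; rewrite /= val_zv_add vm modnDml -addnA addn1 modnDr.
    exact: modn_small.
  have e3 : zv_add m 3 = q.
    apply: val_inj; rewrite /= val_zv_add vm modnDml hq.
    have -> : p + n + 3 = p + 2 + v by lia.
    by rewrite modnDr.
  by case: (block_colours m); rewrite e1 e3.
- have -> : q = zv_add p 3 by apply: val_inj; rewrite /= val_zv_add.
  by case: (block_colours p).
Qed.

Lemma strong_colouring_spread : spread c.
Proof.
move=> x y xy E; have hx := ltn_ord x; have hy := ltn_ord y.
split; rewrite leqNgt; apply/negP => close.
  move/eqP: E; apply/negP; apply: (strong_near (d := y - x)); first lia.
  by rewrite subnKC ?modn_small // ltnW.
move/eqP: (esym E); apply/negP; apply: (strong_near (d := x + v - y)); first lia.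
have -> : y + (x + v - y) = x + v by lia.
by rewrite modnDr modn_small.
Qed.


Lemma clique_bound m : m <= v ->
  (forall a b, a < b < m -> (b - a < 4) || (a + v - b < 4)) -> m <= k.
Proof.
move=> hm close; pose h (i : 'I_m) : 'I_k := c (widen_ord hm i).
suff inj_h : injective h by have := leq_card h inj_h; rewrite !card_ord.
have distinct (i j : 'I_m) : i < j -> h i != h j.
  move=> ij; apply/eqP.
  move=> /(@strong_colouring_spread (widen_ord hm i) (widen_ord hm j) ij) /=.
  by have := close i j; rewrite ij ltn_ord /= => /(_ isT); lia.
move=> i j E; case: (ltngtP i j) => [ij|ji|/val_inj //].
- by have := distinct i j ij; rewrite E eqxx.
- by have := distinct j i ji; rewrite E eqxx.
Qed.

(* On a cycle of length at most 11 a colour class has at most two points: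
   three pairwise far apart points need a cycle of length 12.  Tagging each
   point with its colour and with "an earlier point has the same colour" is
   therefore injective, whence v <= 2k. *)
Lemma pairs_bound : v < 12 -> v <= 2 * k.
Proof.
move=> small.
pose seen (x : 'I_v) := [exists y : 'I_v, (y < x) && (c y == c x)].
pose tag (x : 'I_v) : 'I_k * bool := (c x, seen x).
have no_repeat (x1 x2 : 'I_v) : x1 < x2 -> tag x1 = tag x2 -> False.
  move=> h [E B].
  have : seen x2 by apply/existsP; exists x1; rewrite h E eqxx.
  rewrite -B => /existsP [y /andP [hy /eqP Ey]].
  have := strong_colouring_spread h E.
  have := strong_colouring_spread hy Ey.
  have := strong_colouring_spread (ltn_trans hy h) (etrans Ey E).
  have := ltn_ord x2; lia.
have inj_tag : injective tag.
  move=> x1 x2 E; case: (ltngtP x1 x2) => [h|h|/val_inj //].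
  - by case: (no_repeat _ _ h E).
  - by case: (no_repeat _ _ h (esym E)).
by have := leq_card tag inj_tag; rewrite card_prod card_bool !card_ord; lia.
Qed.
End CyclicDistance.

(* A sequence in {0,1,2,3} whose windows of four consecutive terms are
   pairwise distinct is periodic of period 4: the term g (m+4) must avoid
   the three values g (m+1), g (m+2), g (m+3), as g m does. *)
Lemma four_colour_periodic (g : nat -> nat) :
  (forall m, g m < 4) -> (forall a b, a < b < a + 4 -> g a != g b) ->
  forall m q, g (m + 4 * q) = g m.
Proof.
move=> bound distinct.
have step m : g (m + 4) = g m.
  have d i j : i < j < i + 4 -> g (m + i) <> g (m + j).
    by move=> ij; apply/eqP/distinct; lia.
  have := d 0 1 isT; have := d 0 2 isT; have := d 0 3 isT.
  have := d 1 2 isT; have := d 1 3 isT; have := d 1 4 isT.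
  have := d 2 3 isT; have := d 2 4 isT; have := d 3 4 isT.
  rewrite addn0.
  have := bound m; have := bound (m + 1); have := bound (m + 2).
  have := bound (m + 3); have := bound (m + 4).
  lia.
move=> m; elim=> [|q IH]; first by rewrite muln0 addn0.
by rewrite mulnSr addnA step.
Qed.

(* Four colours only suffice when 4 divides v: unrolled along the integers,
   a strong 4-colouring is both 4-periodic and v-periodic, so the colours of
   0 and of v mod 4 would coincide although these points are at distance
   1, 2 or 3. *)
Lemma five_colours_needed n k (c : 'I_n.+1 -> 'I_k) :
  strong_colouring c -> n.+1 %% 4 != 0 -> 4 < k.
Proof.
move=> strong h4; case: (ltnP 4 k) => // hk; exfalso.
pose g m := nat_of_ord (c (inord (m %% n.+1))).
have val_mod m : nat_of_ord (inord (m %% n.+1) : 'I_n.+1) = m %% n.+1.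
  by rewrite inordK // ltn_pmod.
have distinct a b : a < b < a + 4 -> g a != g b.
  move=> /andP[ab ba]; rewrite /g (inj_eq val_inj).
  apply: (@strong_near _ _ _ strong _ _ (b - a)); first by apply/andP; lia.
  by rewrite (val_mod a) (val_mod b) modnDml subnKC // ltnW.
have period := four_colour_periodic (fun m => leq_trans (ltn_ord _) hk) distinct.
have wrap : g (n.+1 %% 4) = g 0.
  have := period (n.+1 %% 4) (n.+1 %/ 4).
  by rewrite addnC mulnC -divn_eq /g modnn.
by have := distinct 0 (n.+1 %% 4) ltac:(lia); rewrite wrap eqxx.
Qed.

Lemma pattern_colourable n k (f : nat -> nat) : 2 < n ->
  (forall x, x < n.+1 -> f x < k) ->
  (forall x y, x < y < n.+1 -> f x = f y -> 4 <= y - x /\ 4 <= x + n.+1 - y) ->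
  strong_colourable n.+1 k.
Proof.
move=> hn fk far; exists (fun x : 'I_n.+1 => Ordinal (fk x (ltn_ord x))).
apply: spread_strong_colouring => // x y xy [E].
by apply: far; rewrite ?E // xy ltn_ord.
Qed.

(* The colouring by a runs 0123 followed by b runs 01234 is strong: equal
   colours are 4 or 5 apart inside the pattern, and since the pattern starts
   and ends with a complete run, also across the wrap-around point. *)
Lemma four_five_colourable n a b : n.+1 = 4 * a + 5 * b -> 2 < n ->
  strong_colourable n.+1 5.
Proof.
move=> hab hn.
pose f x := if x < 4 * a then x %% 4 else (x - 4 * a) %% 5.
apply: (@pattern_colourable _ _ f) => // [x _|x y /andP[xy yv]].
  by rewrite /f; case: ifP => _; lia.
by rewrite /f; case: ifP; case: ifP; lia.
Qed.

(* Four consecutive points pairwise share a block, so at least four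
   colours are needed. *)
Lemma four_colours_needed n k (c : 'I_n.+1 -> 'I_k) :
  strong_colouring c -> 3 <= n -> 4 <= k.
Proof. by move=> strong hn; apply: (clique_bound strong) => // a b /andP[]; lia. Qed.

(* chi_s(C_7) = 7: all points of Z_7 are within cyclic distance 3. *)
Lemma chi_seven : strong_chromatic_number 7 7.
Proof.
split.
  by apply: (@pattern_colourable _ _ id) => // x y /andP[xy _] E; rewrite E ltnn in xy.
by move=> j [c strong]; apply: (clique_bound strong) => // a b /andP[]; lia.
Qed.

(* chi_s(C_11) = 6: the pattern 012345 01234 works, and at most two points
   share a colour. *)
Lemma chi_eleven : strong_chromatic_number 11 6.
Proof.
split.
  apply: (@pattern_colourable _ _ (modn^~ 6)) => // [x _|x y /andP[xy yv]].
    exact: ltn_pmod.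
  lia.
by move=> j [c strong]; have := pairs_bound strong isT; lia.
Qed.

Lemma chi_multiple_of_four n : 2 < n -> n.+1 %% 4 = 0 ->
  strong_chromatic_number n.+1 4.
Proof.
move=> hn h4; split.
  apply: (@pattern_colourable _ _ (modn^~ 4)) => // [x _|x y /andP[xy yv]].
    exact: ltn_pmod.
  lia.
by move=> j [c strong]; apply: (four_colours_needed strong); lia.
Qed.

(* chi_s(C_v) = 5 when 4 does not divide v and v is not 7 or 11: then
   v = 4a + 5b with b = v mod 4. *)
Lemma chi_five n : 6 <= n -> n.+1 <> 7 -> n.+1 <> 11 -> n.+1 %% 4 != 0 ->
  strong_chromatic_number n.+1 5.
Proof.
move=> hn n7 n11 h4; split.
  apply: (@four_five_colourable _ ((n.+1 - 5 * (n.+1 %% 4)) %/ 4) (n.+1 %% 4)); lia.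
by move=> j [c strong]; apply: (five_colours_needed strong h4).
Qed.

Theorem mainTheorem16 (v : nat) (hv : 7 <= v) :
  strong_chromatic_number v
    (if v == 7 then 7
     else if v == 11 then 6
     else if v %% 4 == 0 then 4
     else 5).
Proof.
case: v hv => [//|n] hv.
case: eqP => [[->]|n7]; first exact: chi_seven.
case: eqP => [[->]|n11]; first exact: chi_eleven.
case: eqP => [h4|h4]; first by apply: chi_multiple_of_four; lia.
by apply: chi_five => //; apply/eqP.
Qed.
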